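(* The automorphism group $\Gamma(S)$ of the separation relation $S$ on $\mathbb Q\times\mathbb Z$ consists exactly of \begin{itemize} \item all positive permutations of $\mathbb Q\times\mathbb Z$ that initiate a permutation $h$ of $\mathbb Q$ of rotation type, and \item all negative permutations of $\mathbb Q\times\mathbb Z$ that initiate a permutation $h$ of $\mathbb Q$ of reflection type. \end{itemize}
   Context: $\mathbb Q\times\mathbb Z$ denotes the set $\mathbb Q\times\mathbb Z$ with the lexicographic order: $(r,z)<(r',z')$ iff $r<r'$, or $r=r'$ and $z<z'$. Relations defined by order formulas are interpreted on $\mathbb Q\times\mathbb Z$ by the same formulas: $B(a,b,c)\iff(a<b<c)\vee(a>b>c)$ and $S(a,b,c,d)\iff(B(a,b,c)\vee B(a,d,c))\wedge(B(b,a,d)\vee B(b,c,d))$; $\Gamma(R)$ is the group of permutations of $\mathbb Q\times\mathbb Z$ preserving $R$. A vertical is a set $\{r\}\times\mathbb Z$. A permutation $g$ is systemic if it maps every vertical onto a vertical; it initiates the permutation $h$ of $\mathbb Q$ with $g(\{a\}\times\mathbb Z)=\{h(a)\}\times\mathbb Z$. A systemic permutation is positive if it preserves the order on each vertical and negative if it reverses the order on each vertical. A section of $\mathbb Q$ is a pair $\{I_1,I_2\}$ with $I_1\cup I_2=\mathbb Q$, $I_1\cap I_2=\emptyset$, and $a<b$ for all $a\in I_1,b\in I_2$ (one of them may be empty). A permutation $h$ of $\mathbb Q$ is of rotation type if for some section $\{I_1,I_2\}$, $h$ is increasing on $I_1$ and on $I_2$ and $h(a)>h(b)$ for all $a\in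 I_1$, $b\in I_2$; it is of reflection type if for some section $\{I_1,I_2\}$, $h$ is decreasing on $I_1$ and on $I_2$ and $h(a)<h(b)$ for all $a\in I_1$, $b\in I_2$. (The automorphism group of $\langle\mathbb Q,S\rangle$ is the set of permutations of $\mathbb Q$ of rotation or reflection type.) *)

From mathcomp Require Import all_boot all_order all_algebra.
Set Implicit Arguments. Unset Strict Implicit. Unset Printing Implicit Defensive.
Import Order.TTheory GRing.Theory Num.Theory.
Local Open Scope ring_scope.

Definition QZ := (rat * int)%type.

Definition qz_lt (p q : QZ) : Prop :=
  p.1 < q.1 \/ (p.1 = q.1 /\ p.2 < q.2).

Definition Bqz (a b c : QZ) : Prop :=
  (qz_lt a b /\ qz_lt b c) \/ (qz_lt b a /\ qz_lt c b).

Definition Sqz (a b c d : QZ) : Prop :=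
  (Bqz a b c \/ Bqz a d c) /\ (Bqz b a d \/ Bqz b c d).

Definition preserves4 (R : QZ -> QZ -> QZ -> QZ -> Prop) (g : QZ -> QZ) : Prop :=
  forall a b c d, R a b c d <-> R (g a) (g b) (g c) (g d).

(* g is systemic and initiates h: g maps each vertical {r} x Z onto {h r} x Z *)
Definition initiates (g : QZ -> QZ) (h : rat -> rat) : Prop :=
  forall r : rat,
    (forall z : int, (g (r, z)).1 = h r) /\
    (forall z' : int, exists z : int, g (r, z) = (h r, z')).

Definition positive_on_verticals (g : QZ -> QZ) : Prop :=
  forall (r : rat) (z z' : int), z < z' -> (g (r, z)).2 < (g (r, z')).2.

Definition negative_on_verticals (g : QZ -> QZ) : Prop :=
  forall (r : rat) (z z' : int), z < z' -> (g (r, z')).2 < (g (r, z)).2.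

(* A section {I1, I2} of Q: I1 is the lower part (downward closed),
   I2 its complement; either may be empty. *)
Definition lower_cut (I1 : rat -> Prop) : Prop :=
  forall a b : rat, I1 b -> a < b -> I1 a.

Definition rotation_type (h : rat -> rat) : Prop :=
  bijective h /\
  exists I1 : rat -> Prop, lower_cut I1 /\
    (forall a b, I1 a -> I1 b -> a < b -> h a < h b) /\
    (forall a b, ~ I1 a -> ~ I1 b -> a < b -> h a < h b) /\
    (forall a b, I1 a -> ~ I1 b -> h b < h a).

Definition reflection_type (h : rat -> rat) : Prop :=
  bijective h /\
  exists I1 : rat -> Prop, lower_cut I1 /\
    (forall a b, I1 a -> I1 b -> a < b -> h b < h a) /\
    (forall a b, ~ I1 a -> ~ I1 b -> a < b -> h b < h a) /\
    (forall a b, I1 a -> ~ I1 b -> h a < h b).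

(* In a linear order the separation relation S depends only on the cyclic orientation of
   triples, up to reversal: if two orders have the same S, then on four distinct points they
   agree on the orientation of (b, c, d) iff they agree on (a, b, c), and chains through fresh
   points spread this to all triples.  Hence if g preserves S, the pulled-back order
   p <' q := g p < g q has the same orientation as <, or the reverse one.  An order with the
   same orientation as < is a cut rotation of it: the points y below some x with x <' y form
   a lower set D, and <' puts the complement of D below D, keeping < inside each part.
   On Q x Z every point has an immediate successor on its vertical; this forces D to be a
   union of verticals and g (r, z + 1) to be the successor of g (r, z), so g translates
   verticals onto verticals and initiates a rotation.  The reversed case reduces to this one
   through (r, z) |-> (-r, -z).  Conversely, cut rotations preserve S.  The facts about at
   most four points are decided by computation over their possible order types (rank
   patterns). *)

From mathcomp Require Import all_boot all_order all_algebra.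
From mathcomp Require Import zify.
From Stdlib Require Import ClassicalEpsilon.
Set Implicit Arguments. Unset Strict Implicit. Unset Printing Implicit Defensive.
Import Order.TTheory GRing.Theory Num.Theory.

Definition asbool (P : Prop) : bool := if excluded_middle_informative P then true else false.

Lemma asboolP (P : Prop) : reflect P (asbool P).
Proof. by rewrite /asbool; case: excluded_middle_informative => H; constructor. Qed.

Section OrderRelations.
Variable T : Type.
Implicit Types (R : rel T) (D : pred T).

Definition betweenb R a b c := (R a b && R b c) || (R b a && R c b).

Definition sepb R a b c d :=
  (betweenb R a b c || betweenb R a d c) && (betweenb R b a d || betweenb R b c d).

Definition cyclicb R a b c := [|| R a b && R b c, R b c && R c a | R c a && R a b].

Definition cyclic_agree R1 R2 a b c := cyclicb R1 a b c == cyclicb R2 a b c.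

Definition down_closed R D := forall x y, R x y -> D y -> D x.

Definition cut_rotate R D : rel T :=
  fun x y => (~~ D x && D y) || ((D x == D y) && R x y).

Lemma betweenb_converse R a b c : betweenb (fun x y => R y x) a b c = betweenb R a b c.
Proof. by rewrite /betweenb orbC. Qed.

Lemma sepb_converse R a b c d : sepb (fun x y => R y x) a b c d = sepb R a b c d.
Proof. by rewrite /sepb !(betweenb_converse R). Qed.

End OrderRelations.

Definition strict_total (T : eqType) (lt : rel T) :=
  [/\ irreflexive lt, transitive lt & forall x y, x != y -> lt x y || lt y x].

Section StrictTotal.
Variables (T : eqType) (lt : rel T).
Hypothesis lt_total : strict_total lt.

Lemma sto_irr x : lt x x = false. Proof. by case: lt_total. Qed.

Lemma sto_trans x y z : lt x y -> lt y z -> lt x z.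
Proof. by case: lt_total => _ tr _; apply: tr. Qed.

Lemma sto_asym x y : lt x y -> lt y x = false.
Proof. by move=> xy; apply/negbTE/negP => /(sto_trans xy); rewrite sto_irr. Qed.

Lemma sto_neq x y : lt x y -> x != y.
Proof. by apply: contraTneq => ->; rewrite sto_irr. Qed.

Lemma sto_connex x y : x != y -> ~~ lt x y -> lt y x.
Proof. by case: lt_total => _ _ tot /tot; case: (lt x y). Qed.

Lemma sto_converse : strict_total (fun x y => lt y x).
Proof.
split=> [x|y x z /= yx zy|x y /=]; [exact: sto_irr | exact: sto_trans zy yx |].
by rewrite eq_sym; case: lt_total => _ _; apply.
Qed.

End StrictTotal.

Lemma strict_total_pullback (A T : eqType) (f : A -> T) (lt : rel T) :
  injective f -> strict_total lt -> strict_total (fun x y => lt (f x) (f y)).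
Proof.
move=> f_inj lt_total; split=> [x|y x z|x y neq] /=; first exact: sto_irr.
  exact: sto_trans.
by case: lt_total => _ _; apply; apply: contra neq => /eqP/f_inj ->.
Qed.

Fixpoint words (A : Type) (alph : seq A) (k : nat) : seq (seq A) :=
  if k is k'.+1 then [seq a :: w | a <- alph, w <- words alph k'] else [:: [::]].

Lemma mem_words (A : eqType) (alph : seq A) k s :
  (s \in words alph k) = (size s == k) && all (mem alph) s.
Proof.
elim: k s => [|k IH] [|a s] //=.
  by apply/allpairsP => -[[b w] []].
apply/allpairsP/andP => [[[b w] [/= b_in]]|[/= sk /andP[a_in s_in]]].
  by rewrite IH => /andP[/eqP <- w_in] [-> ->]; rewrite eqxx /= b_in.
by exists (a, s); rewrite IH -eqSS sk s_in.
Qed.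

Definition rank_rel (s : seq nat) : rel nat := fun i j => nth 0 s i < nth 0 s j.

Section OrderType.
Variables (T : eqType) (lt : rel T).
Hypothesis lt_total : strict_total lt.

Definition order_type (s : seq T) : seq nat := [seq count (lt^~ x) s | x <- s].

Lemma count_lt_mono s x y : x \in s -> lt x y -> count (lt^~ x) s < count (lt^~ y) s.
Proof.
move=> x_in xy.
have le_x_sub : subpred (predU (lt^~ x) (pred1 x)) (lt^~ y).
  by move=> z /orP[zx | /eqP ->] //; apply: (sto_trans lt_total zx).
have no_overlap : count (predI (lt^~ x) (pred1 x)) s = 0.
  by apply/eqP; rewrite -leqn0 leqNgt -has_count; apply/hasPn => z _ /=; rewrite andbC;
     case: eqP => // ->; rewrite (sto_irr lt_total).
have := count_predUI (lt^~ x) (pred1 x) s.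
have := sub_count le_x_sub s.
have : 0 < count (pred1 x) s by rewrite -has_count; apply/hasP; exists x; rewrite /= ?eqxx.
lia.
Qed.

Lemma count_ltE s x y : x \in s -> y \in s -> (count (lt^~ x) s < count (lt^~ y) s) = lt x y.
Proof.
move=> x_in y_in; apply/idP/idP => [|/(count_lt_mono x_in)//].
case: (eqVneq x y) => [-> | neq]; first by rewrite ltnn.
case xy: (lt x y) => // lt_cnt.
have := count_lt_mono y_in (sto_connex lt_total neq (negbT xy)); lia.
Qed.

Lemma count_lt_inj s : {in s &, injective (fun x => count (lt^~ x) s)}.
Proof.
move=> x y x_in y_in eq_cnt; apply/eqP; apply: contraT => neq.
have [_ _ /(_ _ _ neq) /orP[xy | yx]] := lt_total.
  by have := count_lt_mono x_in xy; rewrite eq_cnt ltnn.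
by have := count_lt_mono y_in yx; rewrite eq_cnt ltnn.
Qed.

Lemma count_lt_size s x : x \in s -> count (lt^~ x) s < size s.
Proof.
move=> x_in; rewrite -(count_predC (lt^~ x) s) -[X in X < _]addn0 ltn_add2l -has_count.
by apply/hasP; exists x => //=; rewrite (sto_irr lt_total).
Qed.

Lemma order_type_words s : order_type s \in words (iota 0 (size s)) (size s).
Proof.
rewrite mem_words size_map eqxx; apply/allP => _ /mapP[x x_in ->].
by rewrite inE mem_iota count_lt_size.
Qed.

Lemma rank_rel_order_type s x0 i j : i < size s -> j < size s ->
  rank_rel (order_type s) i j = lt (nth x0 s i) (nth x0 s j).
Proof. by move=> i_lt j_lt; rewrite /rank_rel !(nth_map x0) // count_ltE ?mem_nth. Qed.

Lemma uniq_order_type s : uniq s -> uniq (order_type s).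
Proof. by move=> s_uniq; rewrite map_inj_in_uniq //; apply: count_lt_inj. Qed.

Lemma sepb_order_type s x0 i j k l :
  i < size s -> j < size s -> k < size s -> l < size s ->
  sepb (rank_rel (order_type s)) i j k l =
  sepb lt (nth x0 s i) (nth x0 s j) (nth x0 s k) (nth x0 s l).
Proof. by move=> *; rewrite /sepb /betweenb !(rank_rel_order_type x0). Qed.

Lemma cyclicb_order_type s x0 i j k : i < size s -> j < size s -> k < size s ->
  cyclicb (rank_rel (order_type s)) i j k = cyclicb lt (nth x0 s i) (nth x0 s j) (nth x0 s k).
Proof. by move=> *; rewrite /cyclicb !(rank_rel_order_type x0). Qed.

End OrderType.

Definition uniq_words n := [seq s <- words (iota 0 n) n | uniq s].

(* [d] lists the side of the cut at each of the four points; points of equal rank are equal,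
   hence on the same side. *)
Definition cut_compatible (s : seq nat) (d : seq bool) :=
  all2rel (fun i j => (rank_rel s i j && nth false d j ==> nth false d i) &&
                      ((nth 0 s i == nth 0 s j) ==> (nth false d i == nth false d j)))
          (iota 0 4).

Lemma cut_rotate_sep_check :
  all (fun s => all (fun d => cut_compatible s d ==>
        (sepb (cut_rotate (rank_rel s) (nth false d)) 0 1 2 3 == sepb (rank_rel s) 0 1 2 3))
      (words [:: true; false] 4))
    (words (iota 0 4) 4).
Proof. by vm_compute. Qed.

Definition sep_agree (R1 R2 : rel nat) :=
  all (fun i => all (fun j => all (fun k => all (fun l =>
    sepb R1 i j k l == sepb R2 i j k l) (iota 0 4)) (iota 0 4)) (iota 0 4)) (iota 0 4).

Lemma cyclic_agree_shift_check :
  all (fun s1 => all (fun s2 => sep_agree (rank_rel s1) (rank_rel s2) ==>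
        (cyclic_agree (rank_rel s1) (rank_rel s2) 1 2 3 ==
         cyclic_agree (rank_rel s1) (rank_rel s2) 0 1 2))
      (uniq_words 4))
    (uniq_words 4).
Proof. by vm_compute. Qed.

Lemma cyclic_converse_check :
  all (fun s => cyclicb (fun i j => rank_rel s j i) 0 1 2 == ~~ cyclicb (rank_rel s) 0 1 2)
    (uniq_words 3).
Proof. by vm_compute. Qed.

Section FourPoints.
Variables (T : eqType) (lt : rel T).
Hypothesis lt_total : strict_total lt.

Lemma sepb_cut_rotate D : down_closed lt D ->
  forall a b c d, sepb (cut_rotate lt D) a b c d = sepb lt a b c d.
Proof.
move=> D_down a b c d; set pts := [:: a; b; c; d].
have rankE := rank_rel_order_type lt_total (s := pts) a.
have typeE i : i < 4 -> nth 0 (order_type lt pts) i = count (lt^~ (nth a pts i)) pts.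
  by move=> i_lt; rewrite (nth_map a).
have D_in : map D pts \in words [:: true; false] 4.
  by rewrite mem_words size_map; apply/allP => b' _; case: b'.
have dE i : i < 4 -> nth false (map D pts) i = D (nth a pts i) by move=> i_lt; rewrite (nth_map a).
suff compat : cut_compatible (order_type lt pts) (map D pts).
  have /allP/(_ _ D_in)/implyP/(_ compat)/eqP :=
    allP cut_rotate_sep_check _ (order_type_words lt_total pts).
  by rewrite /sepb /betweenb /cut_rotate !rankE // !dE.
apply/allrelP => i j; rewrite !mem_iota add0n => i_lt j_lt; rewrite rankE // !dE // !typeE //.
apply/andP; split; first by apply/implyP => /andP[]; apply: D_down.
have pts_i : nth a pts i \in pts by apply: mem_nth.
have pts_j : nth a pts j \in pts by apply: mem_nth.
by apply/implyP => /eqP/(count_lt_inj lt_total pts_i pts_j) ->.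
Qed.

Lemma cyclicb_converse x y z :
  uniq [:: x; y; z] -> cyclicb (fun u v => lt v u) x y z = ~~ cyclicb lt x y z.
Proof.
move=> xyz; set pts := [:: x; y; z].
have type_in : order_type lt pts \in uniq_words 3.
  by rewrite mem_filter uniq_order_type // order_type_words.
have /eqP := allP cyclic_converse_check _ type_in.
by rewrite (cyclicb_order_type lt_total x) // /cyclicb !(rank_rel_order_type lt_total x).
Qed.

Lemma cyclic_agree_shift lt2 : strict_total lt2 ->
  (forall a b c d, sepb lt a b c d = sepb lt2 a b c d) ->
  forall a b c d, uniq [:: a; b; c; d] ->
  cyclic_agree lt lt2 b c d = cyclic_agree lt lt2 a b c.
Proof.
move=> lt2_total same_sep a b c d abcd; set pts := [:: a; b; c; d].
have type_in R : strict_total R -> order_type R pts \in uniq_words 4.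
  by move=> R_total; rewrite mem_filter uniq_order_type // order_type_words.
suff agree : sep_agree (rank_rel (order_type lt pts)) (rank_rel (order_type lt2 pts)).
  have /allP/(_ _ (type_in _ lt2_total))/implyP/(_ agree)/eqP :=
    allP cyclic_agree_shift_check _ (type_in _ lt_total).
  by rewrite /cyclic_agree !(cyclicb_order_type lt_total a) // !(cyclicb_order_type lt2_total a).
apply/allP => i; rewrite mem_iota => i_lt; apply/allP => j; rewrite mem_iota => j_lt.
apply/allP => k; rewrite mem_iota => k_lt; apply/allP => l; rewrite mem_iota => l_lt.
by rewrite (sepb_order_type lt_total a) // (sepb_order_type lt2_total a) // same_sep.
Qed.

End FourPoints.

Definition same_orientation (T : eqType) (lt lt2 : rel T) :=
  forall x y z, uniq [:: x; y; z] -> cyclicb lt x y z = cyclicb lt2 x y z.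

Section Orientation.
Variables (T : eqType) (lt lt2 : rel T).
Hypotheses (lt_total : strict_total lt) (lt2_total : strict_total lt2).
Hypothesis same_sep : forall a b c d, sepb lt a b c d = sepb lt2 a b c d.
Hypothesis fresh : forall s : seq T, exists w, w \notin s.

Lemma agree_fresh w3 w2 w1 a b c :
  uniq [:: w3; w2; w1; a; b; c] -> cyclic_agree lt lt2 w3 w2 w1 = cyclic_agree lt lt2 a b c.
Proof.
move=> U; have shift := cyclic_agree_shift lt_total lt2_total same_sep.
rewrite -(shift _ _ _ _ (take_uniq 4 U)) -(shift _ _ _ _ (take_uniq 4 (drop_uniq 1 U))).
by rewrite -(shift _ _ _ _ (drop_uniq 2 U)).
Qed.

Lemma fresh_triple (s : seq T) : exists w1 w2 w3,
  forall t : seq T, {subset t <= s} -> uniq t -> uniq [:: w3, w2, w1 & t].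
Proof.
have [w1 w1_new] := fresh s; have [w2 w2_new] := fresh (w1 :: s).
have [w3 w3_new] := fresh (w2 :: w1 :: s).
exists w1, w2, w3 => t t_sub t_uniq; move: w2_new w3_new; rewrite /= t_uniq !inE !negb_or.
have new_t w : w \notin s -> w \notin t by apply: contra; apply: t_sub.
by move=> /andP[-> /new_t ->] /and3P[-> -> /new_t ->]; rewrite new_t.
Qed.

Lemma orientation_dichotomy :
  same_orientation lt lt2 \/ same_orientation lt (fun x y => lt2 y x).
Proof.
have agree_all a b c x y z : uniq [:: a; b; c] -> uniq [:: x; y; z] ->
    cyclic_agree lt lt2 a b c = cyclic_agree lt lt2 x y z.
  move=> abc xyz; have [w1 [w2 [w3 w_new]]] := fresh_triple ([:: a; b; c] ++ [:: x; y; z]).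
  rewrite -(agree_fresh (w_new _ _ abc)) ?(agree_fresh (w_new _ _ xyz)) // => u u_in;
    by rewrite mem_cat u_in ?orbT.
have [w1 [w2 [w3 w_new]]] := fresh_triple [::].
have w_uniq : uniq [:: w3; w2; w1] by apply: (w_new [::]).
case agree_w : (cyclic_agree lt lt2 w3 w2 w1); [left | right] => x y z xyz;
  move: agree_w; rewrite (agree_all _ _ _ _ _ _ w_uniq xyz) /cyclic_agree.
  by move/eqP.
by rewrite (cyclicb_converse lt2_total xyz); case: cyclicb; case: cyclicb.
Qed.

End Orientation.

Section CutRotation.
Variables (T : eqType) (lt lt2 : rel T).
Hypotheses (lt_total : strict_total lt) (lt2_total : strict_total lt2).
Hypothesis same_orient : same_orientation lt lt2.

Lemma cyclicb_of_chain x y z : lt x y -> lt y z -> cyclicb lt2 x y z.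
Proof.
move=> xy yz; have xz := sto_trans lt_total xy yz.
have xyz : uniq [:: x; y; z] by rewrite /= !inE !negb_or !(sto_neq lt_total) ?xz.
by rewrite -same_orient // /cyclicb xy yz.
Qed.

Lemma chain_top_first x y z : lt x y -> lt y z -> lt2 z y -> lt2 z x && lt2 x y.
Proof.
move=> xy yz zy; have := cyclicb_of_chain xy yz.
by rewrite /cyclicb (sto_asym lt2_total zy) andbF.
Qed.

Lemma chain_middle_not_first x y z : lt x y -> lt y z -> lt2 y x -> lt2 x z -> False.
Proof.
move=> xy yz yx xz; have := cyclicb_of_chain xy yz.
by rewrite /cyclicb (sto_asym lt2_total yx) (sto_asym lt2_total xz) !andbF.
Qed.

Definition lifted y := asbool (exists2 x, lt y x & lt2 x y).

Lemma lifted_down_closed : down_closed lt lifted.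
Proof.
move=> y' y y'y /asboolP[x yx xy]; apply/asboolP; exists x; first exact: sto_trans y'y yx.
by case/andP: (chain_top_first y'y yx xy).
Qed.

Lemma lt2_below_lifted p q : lifted q -> lt p q -> lt2 p q.
Proof. by move=> /asboolP[w qw wq] pq; case/andP: (chain_top_first pq qw wq). Qed.

Lemma lt2_unlifted p q : ~~ lifted p -> lt p q -> lt2 p q.
Proof.
move=> p_unlifted pq; case pq2: (lt2 p q) => //.
have qp2 : lt2 q p := sto_connex lt2_total (sto_neq lt_total pq) (negbT pq2).
by move: p_unlifted; have -> // : lifted p; apply/asboolP; exists q.
Qed.

Lemma lt2_unlifted_lifted p q : ~~ lifted p -> lifted q -> lt2 p q.
Proof.
move=> p_unlifted q_lifted; have /asboolP[w qw wq] := q_lifted.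
have neq : p != q by apply: contraNneq p_unlifted => ->.
have qp : lt q p.
  apply: (sto_connex lt_total neq); apply: contra p_unlifted => pq.
  exact: lifted_down_closed pq q_lifted.
case pq2: (lt2 p q) => //; have qp2 := sto_connex lt2_total neq (negbT pq2).
have wp2 := sto_trans lt2_total wq qp2.
have wp : lt w p.
  have pw_neq : p != w by rewrite eq_sym (sto_neq lt2_total wp2).
  apply: (sto_connex lt_total pw_neq); apply: contra p_unlifted => pw.
  by apply/asboolP; exists w.
by case: (chain_middle_not_first qw wp wq qp2).
Qed.

Lemma lt2_eq_lt p q : (lt p q -> lt2 p q) -> (lt q p -> lt2 q p) -> lt2 p q = lt p q.
Proof.
move=> pq qp; case pq1: (lt p q); first exact: pq.
case: (eqVneq p q) => [-> | neq]; first by rewrite sto_irr.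
by rewrite (sto_asym lt2_total (qp (sto_connex lt_total neq (negbT pq1)))).
Qed.

Lemma same_orientation_cut_rotate p q : lt2 p q = cut_rotate lt lifted p q.
Proof.
rewrite /cut_rotate; case p_lifted: (lifted p); case q_lifted: (lifted q) => /=.
- by apply: lt2_eq_lt; apply: lt2_below_lifted.
- by apply: (sto_asym lt2_total); apply: lt2_unlifted_lifted; rewrite ?q_lifted.
- by apply: lt2_unlifted_lifted; rewrite ?p_lifted.
- by apply: lt2_eq_lt; apply: lt2_unlifted; rewrite ?p_lifted ?q_lifted.
Qed.

End CutRotation.

Local Open Scope ring_scope.

Definition ltq (p q : QZ) : bool := ((p : rat *l int) < q)%O.

Lemma ltqE p q : ltq p q = (p.1 < q.1) || ((p.1 == q.1) && (p.2 < q.2)).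
Proof. by rewrite /ltq ltEprodlexi; case: (ltgtP p.1 q.1). Qed.

Lemma ltq_total : strict_total ltq.
Proof.
split=> [x|y x z|x y]; rewrite /ltq ?ltxx //; first exact: lt_trans.
exact: (@lt_total _ (rat *l int)).
Qed.

Lemma ltqP p q : reflect (qz_lt p q) (ltq p q).
Proof.
rewrite ltqE; apply: (iffP orP) => -[lt1 | eq_lt]; [by left | right | by left | right].
  by case/andP: eq_lt => /eqP.
by case: eq_lt => -> ->; rewrite eqxx.
Qed.

Lemma BqzE a b c : Bqz a b c <-> betweenb ltq a b c.
Proof.
rewrite /Bqz /betweenb; split.
  by case=> -[/ltqP-> /ltqP->]; rewrite ?orbT.
by case/orP => /andP[/ltqP ab /ltqP bc]; [left | right].
Qed.

Lemma SqzE a b c d : Sqz a b c d <-> sepb ltq a b c d.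
Proof.
rewrite /Sqz /sepb; split.
  by case=> [[/BqzE-> | /BqzE->] [/BqzE-> | /BqzE->]]; rewrite ?orbT.
by case/andP => /orP[/BqzE | /BqzE] ? /orP[/BqzE | /BqzE] ?; split; by [left | right].
Qed.

Lemma qz_fresh (s : seq QZ) : exists w, w \notin s.
Proof.
have [r r_gt] : exists r : rat, forall x, x \in s -> x.1 < r.
  elim: s => [|x s [r IH]]; first by exists 0.
  exists (Num.max r (x.1 + 1)) => y; rewrite inE => /orP[/eqP -> | /IH y_lt].
    by rewrite lt_max ltrDl ltr01 orbT.
  by rewrite lt_max y_lt.
by exists (r, 0); apply/negP => /r_gt; rewrite ltxx.
Qed.

Lemma ltq_between r z w : ltq (r, z) w -> ltq w (r, z + 1) = false.
Proof.
case: w => r' z'; rewrite !ltqE /=; case: (ltgtP r r') => //= _ z_lt.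
by apply/negbTE; rewrite -leNgt; lia.
Qed.

Lemma ltq_succ r z w : ltq (r, z) w -> w != (r, z + 1) -> ltq (r, z + 1) w.
Proof.
by move=> zw neq; apply: (sto_connex ltq_total neq); rewrite ltq_between.
Qed.

Lemma ltq_pred r z w : ltq w (r, z + 1) -> w != (r, z) -> ltq w (r, z).
Proof.
move=> wz neq; apply: (sto_connex ltq_total); first by rewrite eq_sym.
by apply: contraTN wz => /ltq_between ->.
Qed.

Lemma int_step_const (A : Type) (f : int -> A) :
  (forall z, f (z + 1) = f z) -> forall z, f z = f 0.
Proof.
move=> step; elim/int_rec => [//|n IH|n IH]; rewrite -IH.
  by rewrite -(step n); congr f; lia.
by rewrite -[in LHS](step (- n.+1%:Z)); congr f; lia.
Qed.

Section CutRotationQZ.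
Variables (g g' : QZ -> QZ) (D : pred QZ).
Hypotheses (gK : cancel g g') (g'K : cancel g' g).
Hypothesis D_down : down_closed ltq D.
Hypothesis g_lt : forall p q, ltq (g p) (g q) = cut_rotate ltq D p q.

Lemma cut_succ r z : D (r, z + 1) = D (r, z).
Proof.
apply/idP/idP => [|D_z]; first by apply: D_down; rewrite ltqE /= eqxx ltrDl ltr01 orbT.
apply: contraT => not_D.
pose y := g' ((g (r, z + 1)).1, (g (r, z + 1)).2 - 1).
have : cut_rotate ltq D y (r, z + 1).
  by rewrite -g_lt g'K ltqE /= eqxx gtrDl ltrN10 orbT.
rewrite /cut_rotate (negbTE not_D) andbF /= => /andP[/eqP D_y y_lt].
have y_neq : y != (r, z) by apply: contra_eqN D_y => /eqP ->; rewrite D_z.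
by move: D_y; rewrite (D_down (ltq_pred y_lt y_neq) D_z).
Qed.

Lemma g_succ r z : g (r, z + 1) = ((g (r, z)).1, (g (r, z)).2 + 1).
Proof.
have cut_eq : D (r, z + 1) = D (r, z) := cut_succ r z.
have g_step : ltq (g (r, z)) (g (r, z + 1)).
  by rewrite g_lt /cut_rotate cut_eq eqxx andNb ltqE /= eqxx ltrDl ltr01 orbT.
set s := ((g (r, z)).1, (g (r, z)).2 + 1).
case: (eqVneq (g (r, z + 1)) s) => // neq; exfalso.
have lt_s : ltq (g (r, z)) s by rewrite /s ltqE /= eqxx ltrDl ltr01 orbT.
have s_lt : ltq s (g (r, z + 1)).
  by move: g_step neq; rewrite /s; case: (g (r, z)) => u v; apply: ltq_succ.
move: lt_s s_lt; rewrite -[s]g'K !g_lt /cut_rotate cut_eq.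
by case: (D (r, z)); case: (D (g' s)) => //= zw; rewrite ltq_between.
Qed.

Let h r := (g (r, 0)).1.
Let c r := (g (r, 0)).2.

Lemma g_pair r z : g (r, z) = (h r, c r + z).
Proof.
rewrite /h /c; pose f z := ((g (r, z)).1, (g (r, z)).2 - z).
have f_const : forall z, f z = f 0.
  by apply: int_step_const => z'; rewrite /f g_succ /=; congr pair; lia.
have := f_const z; rewrite /f subr0; case: (g (r, z)) => u v /= [-> <-].
by rewrite subrK.
Qed.

Lemma h_inj : injective h.
Proof.
move=> a b hab; have : g (b, c a - c b) = g (a, 0).
  by rewrite !g_pair hab; congr pair; lia.
by move/(can_inj gK) => -[->].
Qed.

Lemma h_bijective : bijective h.
Proof.
exists (fun s => (g' (s, 0)).1) => [r | s].
  by rewrite -[(h r, 0)](_ : g (r, - c r) = _) ?gK // g_pair addrN.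
by case E: (g' (s, 0)) => [r z] /=; have := g'K (s, 0); rewrite E g_pair => -[].
Qed.

Lemma h_lt a b : a != b -> cut_rotate ltq D (a, 0) (b, 0) -> h a < h b.
Proof.
move=> neq; rewrite -g_lt !g_pair ltqE /= (inj_eq h_inj) (negbTE neq).
by rewrite andFb orbF.
Qed.

Lemma cut_rotation_initiates :
  exists h, initiates g h /\ positive_on_verticals g /\ rotation_type h.
Proof.
exists h; split; [|split].
- move=> r; split=> [z | z']; first by rewrite g_pair.
  by exists (z' - c r); rewrite g_pair; congr pair; lia.
- by move=> r z z' zz'; rewrite !g_pair /= ltrD2l.
split; first exact: h_bijective.
exists (fun a => D (a, 0)); split; [|split; [|split]].
- by move=> a b D_b ab; apply: (D_down _ D_b); rewrite ltqE /= ab.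
- move=> a b D_a D_b ab; apply: h_lt; first by rewrite lt_eqF.
  by rewrite /cut_rotate D_a D_b /= ltqE /= ab.
- move=> a b /negP/negbTE D_a /negP/negbTE D_b ab; apply: h_lt; first by rewrite lt_eqF.
  by rewrite /cut_rotate D_a D_b /= ltqE /= ab.
- move=> a b D_a /negP/negbTE D_b; apply: h_lt; last by rewrite /cut_rotate D_a D_b.
  by apply: contraTneq D_a => <-; rewrite D_b.
Qed.

End CutRotationQZ.

Definition rho (p : QZ) : QZ := (- p.1, - p.2).

Lemma rhoK : involutive rho.
Proof. by move=> [a b]; rewrite /rho /= !opprK. Qed.

Lemma ltq_rho p q : ltq (rho p) (rho q) = ltq q p.
Proof. by rewrite !ltqE /= !ltrN2 eqr_opp eq_sym. Qed.

Lemma sepb_rho a b c d : sepb ltq (rho a) (rho b) (rho c) (rho d) = sepb ltq a b c d.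
Proof. by rewrite -(sepb_converse ltq) /sepb /betweenb !ltq_rho. Qed.

Lemma initiates_rho g1 g2 h :
  g2 =1 rho \o g1 -> initiates g1 h -> initiates g2 (fun r => - h r).
Proof.
move=> g2E g1h r; have [first onto] := g1h r; split=> [z | z']; first by rewrite g2E /= first.
by have [z g1z] := onto (- z'); exists z; rewrite g2E /= g1z /rho /= opprK.
Qed.

Lemma positive_rho g1 g2 :
  g2 =1 rho \o g1 -> positive_on_verticals g1 -> negative_on_verticals g2.
Proof. by move=> g2E pos r z z' zz'; rewrite !g2E /= ltrN2 pos. Qed.

Lemma negative_rho g1 g2 :
  g2 =1 rho \o g1 -> negative_on_verticals g1 -> positive_on_verticals g2.
Proof. by move=> g2E neg r z z' zz'; rewrite !g2E /= ltrN2 neg. Qed.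

Lemma bijectiveN (h : rat -> rat) : bijective h -> bijective (fun r => - h r).
Proof.
by case=> hi hK1 hK2; exists (fun s => hi (- s)) => [r | s] /=; rewrite ?opprK ?hK1 ?hK2 ?opprK.
Qed.

Lemma rotation_typeN h : rotation_type h -> reflection_type (fun r => - h r).
Proof.
case=> /bijectiveN h_bij [I [cut [mono1 [mono2 wrap]]]]; split=> //.
exists I; split=> //; split; [|split] => a b *; rewrite ltrN2;
  [exact: mono1 | exact: mono2 | exact: wrap].
Qed.

Lemma reflection_typeN h : reflection_type h -> rotation_type (fun r => - h r).
Proof.
case=> /bijectiveN h_bij [I [cut [anti1 [anti2 wrap]]]]; split=> //.
exists I; split=> //; split; [|split] => a b *; rewrite ltrN2;
  [exact: anti1 | exact: anti2 | exact: wrap].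
Qed.

Lemma reflection_of_cut g g' D : cancel g g' -> cancel g' g -> down_closed ltq D ->
  (forall p q, ltq (g q) (g p) = cut_rotate ltq D p q) ->
  exists h, initiates g h /\ negative_on_verticals g /\ reflection_type h.
Proof.
move=> gK g'K D_down g_gt.
have rho_gK : cancel (rho \o g) (g' \o rho) by move=> p /=; rewrite rhoK gK.
have rho_g'K : cancel (g' \o rho) (rho \o g) by move=> p /=; rewrite g'K rhoK.
have rho_g_lt p q : ltq ((rho \o g) p) ((rho \o g) q) = cut_rotate ltq D p q.
  by rewrite /= ltq_rho g_gt.
have [h [init [pos rot]]] := cut_rotation_initiates rho_gK rho_g'K D_down rho_g_lt.
have g_rho : g =1 rho \o (rho \o g) by move=> p /=; rewrite rhoK.
exists (fun r => - h r); split; first exact: initiates_rho g_rho init.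
by split; [exact: positive_rho g_rho pos | exact: rotation_typeN].
Qed.

Lemma rotation_type_cut h :
  rotation_type h ->
  exists I : pred rat, lower_cut I /\ forall a b, (h a < h b) = cut_rotate <%R I a b.
Proof.
case=> _ [I1 [cut [mono1 [mono2 wrap]]]]; exists (fun a => asbool (I1 a)); split.
  by move=> a b /asboolP Ib ab; apply/asboolP; apply: cut Ib ab.
move=> a b; rewrite /cut_rotate; case: (asboolP (I1 a)) => Ia; case: (asboolP (I1 b)) => Ib /=.
- case: (ltgtP a b) => [ab | ba | ->]; last exact: ltxx; first exact: mono1.
  exact: lt_gtF (mono1 _ _ Ib Ia ba).
- exact: lt_gtF (wrap _ _ Ia Ib).
- exact: wrap.
- case: (ltgtP a b) => [ab | ba | ->]; last exact: ltxx; first exact: mono2.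
  exact: lt_gtF (mono2 _ _ Ib Ia ba).
Qed.

Lemma initiates_cut_rotate g h (I : pred rat) :
  initiates g h -> positive_on_verticals g -> injective h ->
  (forall a b, (h a < h b) = cut_rotate <%R I a b) ->
  forall p q, ltq (g p) (g q) = cut_rotate ltq (fun p => I p.1) p q.
Proof.
move=> init pos h_inj h_cut [r z] [r' z'].
have first x y : (g (x, y)).1 = h x := (init x).1 y.
rewrite ltqE !first /cut_rotate ltqE /=; case: (eqVneq r r') => [<- | neq].
  rewrite !ltxx !eqxx andNb /=; case: (ltgtP z z') => [zz' | z'z | ->]; last exact: ltxx.
    exact: pos.
  exact: lt_gtF (pos _ _ _ z'z).
by rewrite (inj_eq h_inj) (negbTE neq) !andFb !orbF h_cut.
Qed.

Lemma preserves_of_rotation g h :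
  initiates g h -> positive_on_verticals g -> rotation_type h -> preserves4 Sqz g.
Proof.
move=> init pos rot; have [I [I_cut h_cut]] := rotation_type_cut rot.
have g_lt := initiates_cut_rotate init pos (bij_inj rot.1) h_cut.
have D_down : down_closed ltq (fun p => I p.1).
  by move=> [a z] [b z']; rewrite ltqE /= => /orP[ab Ib | /andP[/eqP -> _] //]; apply: I_cut Ib ab.
move=> a b c d; rewrite !SqzE -(sepb_cut_rotate ltq_total D_down).
by rewrite /sepb /betweenb !g_lt.
Qed.

Lemma preserves_of_reflection g h :
  initiates g h -> negative_on_verticals g -> reflection_type h -> preserves4 Sqz g.
Proof.
move=> init neg refl; have g_rho : rho \o g =1 rho \o g by [].
have := preserves_of_rotation (initiates_rho g_rho init) (negative_rho g_rho neg)
  (reflection_typeN refl).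
by move=> pres a b c d; rewrite (pres a b c d) !SqzE /= sepb_rho.
Qed.

Theorem mainTheorem10 (g : QZ -> QZ) :
  bijective g ->
  (preserves4 Sqz g <->
   ((exists h : rat -> rat,
       initiates g h /\ positive_on_verticals g /\ rotation_type h) \/
    (exists h : rat -> rat,
       initiates g h /\ negative_on_verticals g /\ reflection_type h))).
Proof.
case=> g' gK g'K; split=> [g_pres | [[h [init [pos rot]]] | [h [init [neg refl]]]]].
- pose lt2 p q := ltq (g p) (g q).
  have lt2_total : strict_total lt2 := strict_total_pullback (can_inj gK) ltq_total.
  have same_sep a b c d : sepb ltq a b c d = sepb lt2 a b c d.
    by apply/idP/idP => [/SqzE/g_pres/SqzE | sep2]; last apply/SqzE/g_pres/SqzE.
  case: (orientation_dichotomy ltq_total lt2_total same_sep qz_fresh) => [same | opposite].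
    left; apply: (cut_rotation_initiates gK g'K (lifted_down_closed ltq_total lt2_total same)).
    exact: (same_orientation_cut_rotate ltq_total lt2_total same).
  have lt2'_total := sto_converse lt2_total.
  right; apply: (reflection_of_cut gK g'K (lifted_down_closed ltq_total lt2'_total opposite)).
  exact: (same_orientation_cut_rotate ltq_total lt2'_total opposite).
- exact: preserves_of_rotation init pos rot.
- exact: preserves_of_reflection init neg refl.
Qed.
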